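(* Let $\beta\in[0,1)$. If $\lambda$ is an eigenvalue of $\Delta_\beta$, then $\lambda>0$.
   Context: Tree: for an integer $m\ge2$, $\mathbb{T}_m$ has vertices the root $\emptyset$ and all finite sequences $(\emptyset,a_1,\dots,a_k)$, $a_i\in\{0,\dots,m-1\}$; $|x|$ is the level, successors of $x$ are $(x,i)$, $\hat x$ is the immediate predecessor of $x\ne\emptyset$. A branch is an infinite sequence $(x_n)_{n\ge0}$ with $x_0=\emptyset$, $x_{n+1}$ a successor of $x_n$; $\partial\mathbb{T}_m$ is the set of branches; $\lim_{x\to y}u(x)=\lim_n u(x_n)$ for $y=(x_n)$. Operator: $p_\beta=1$ if $\beta=0$, $p_\beta=\beta/(1-\beta)$ if $\beta\in(0,1)$. $\Delta_\beta u(\emptyset)=\frac1m\sum_{i=0}^{m-1}u(\emptyset,i)-u(\emptyset)$ and, for $x\ne\emptyset$, $\Delta_\beta u(x)=\big(\beta u(\hat x)+\frac{1-\beta}{m}\sum_{i=0}^{m-1}u(x,i)-u(x)\big)p_\beta^{-|x|}$. Eigenvalues: $\lambda\in\mathbb{R}$ is an eigenvalue of $\Delta_\beta$ if there is a bounded $u:\mathbb{T}_m\to\mathbb{R}$, $u\not\equiv0$, with $-\Delta_\beta u=\lambda u$ on $\mathbb{T}_m$ and $\lim_{x\to y}u(x)=0$ for every $y\in\partial\mathbb{T}_m$. *)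

From HB Require Import structures.
From mathcomp Require Import all_boot all_order all_algebra.
From mathcomp Require Import all_classical all_reals all_analysis.
Set Implicit Arguments. Unset Strict Implicit. Unset Printing Implicit Defensive.
Import Order.TTheory GRing.Theory Num.Theory.
Import numFieldNormedType.Exports.
Local Open Scope classical_set_scope.
Local Open Scope ring_scope.

(* A vertex (root, a_1, ..., a_k) is encoded as the
   REVERSED list [:: a_k; ...; a_1] of digits in 'I_m, so that
   - the root is [::],
   - the successor (x, i) is  i :: x,
   - the immediate predecessor of x <> root is  behead x,
   - the level |x| is  size x. *)
Definition vertex (m : nat) := seq 'I_m.

Fixpoint branch_vertex (m : nat) (b : nat -> 'I_m) (n : nat) : vertex m :=
  match n with
  | 0 => [::]
  | n'.+1 => b n' :: branch_vertex b n'
  end.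

Definition p_beta (R : realType) (beta : R) : R :=
  if beta == 0 then 1 else beta / (1 - beta).

Definition Delta_beta (R : realType) (m : nat) (beta : R)
    (u : vertex m -> R) (x : vertex m) : R :=
  match x with
  | [::] => (m%:R)^-1 * (\sum_(i < m) u [:: i]) - u [::]
  | _ :: x' =>
      (beta * u x' + (1 - beta) / m%:R * (\sum_(i < m) u (i :: x)) - u x)
        * ((p_beta beta) ^+ size x)^-1
  end.

(* lambda is an eigenvalue of Delta_beta on T_m (Dirichlet condition at
   every branch of the boundary) *)
Definition is_eigenvalue (R : realType) (m : nat) (beta lambda : R) : Prop :=
  exists u : vertex m -> R,
    [/\ (exists M : R, forall x, `|u x| <= M),
        (exists x, u x != 0),
        (forall x, - Delta_beta beta u x = lambda * u x) &
        (forall b : nat -> 'I_m,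
            (fun n => u (branch_vertex b n)) @ \oo --> (0 : R))].

From HB Require Import structures.
From mathcomp Require Import all_boot all_order all_algebra.
From mathcomp Require Import all_classical all_reals all_analysis.
From mathcomp Require Import lra.
Import Order.TTheory GRing.Theory Num.Theory.
Import numFieldNormedType.Exports.

(* A maximum principle.  If lambda <= 0, an eigenfunction u satisfies
   Delta_beta u >= 0 wherever u > 0.  At such a vertex x which is not smaller
   than its predecessor, the mean of u over the successors of x is at least
   u x, so some successor is again at least u x.  Starting from a positive
   value and climbing this way yields a branch along which u stays bounded
   below by a positive constant, against the boundary condition.  Applying
   this to u and -u shows u = 0. *)

Set Implicit Arguments. Unset Strict Implicit. Unset Printing Implicit Defensive.
Local Open Scope ring_scope.

Section ClimbingBranch.
Variables (m : nat) (next : vertex m -> 'I_m) (y : vertex m).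

Fixpoint climb (k : nat) : vertex m :=
  if k is k'.+1 then next (climb k') :: climb k' else y.

(* the digits of y (stored in reverse, see [vertex]), then those chosen by next *)
Definition climbing_branch (n : nat) : 'I_m :=
  if (n < size y)%N then nth (next y) y (size y - n.+1)
  else next (climb (n - size y)).

Lemma branch_vertex_climbing_prefix n :
  (n <= size y)%N -> branch_vertex climbing_branch n = drop (size y - n) y.
Proof.
elim: n => [|n IHn] le_ny /=; first by rewrite subn0 drop_size.
rewrite IHn 1?ltnW // /climbing_branch le_ny.
by rewrite [in RHS](drop_nth (next y)) ?subnSK // leq_subr.
Qed.

Lemma branch_vertex_climbing k :
  branch_vertex climbing_branch (size y + k) = climb k.
Proof.
elim: k => [|k IHk].
  by rewrite addn0 branch_vertex_climbing_prefix // subnn drop0.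
by rewrite addnS /= IHk /climbing_branch ltnNge leq_addr /= addKn.
Qed.

End ClimbingBranch.

Lemma p_beta_gt0 (R : realType) (beta : R) :
  0 <= beta -> beta < 1 -> 0 < p_beta beta.
Proof.
move=> beta_ge0 beta_lt1; rewrite /p_beta; case: eqP => [//|/eqP beta_neq0].
by rewrite divr_gt0 ?subr_gt0 // lt0r beta_neq0.
Qed.

Lemma Delta_betaN (R : realType) (m : nat) (beta : R) (u : vertex m -> R) x :
  Delta_beta beta (fun z => - u z) x = - Delta_beta beta u x.
Proof. by case: x => [|a x] /=; rewrite sumrN; lra. Qed.

Definition ge_parent (R : realType) (m : nat) (u : vertex m -> R) (x : vertex m) :=
  if x is _ :: x' then u x' <= u x else True.

Lemma exists_ge_parent_ge (R : realType) (m : nat) (u : vertex m -> R) x :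
  exists y, u x <= u y /\ ge_parent u y.
Proof.
elim: x => [|a x [y [le_xy ge_y]]]; first by exists [::].
case: (lerP (u x) (u (a :: x))) => [le_parent | lt_parent].
  by exists (a :: x).
by exists y; split; first exact: le_trans (ltW lt_parent) le_xy.
Qed.

Lemma exists_ge_mean (R : realFieldType) (m : nat) (f : 'I_m -> R) c :
  (0 < m)%N -> m%:R * c <= \sum_(i < m) f i -> exists i, c <= f i.
Proof.
move=> m_gt0 le_mean; apply/not_existsP => /= not_ge.
have lt_f i : f i < c by rewrite ltNge; apply/negP; apply: not_ge.
have : \sum_(i < m) f i < \sum_(i < m) c.
  by apply: ltr_sum => //; apply/hasP; exists (Ordinal m_gt0).
by rewrite sumr_const card_ord -mulr_natl ltNge le_mean.
Qed.

Section MaximumPrinciple.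
Variables (R : realType) (m : nat) (beta : R) (u : vertex m -> R).
Hypotheses (m_gt0 : (0 < m)%N) (beta_ge0 : 0 <= beta) (beta_lt1 : beta < 1).

Lemma mean_children_ge x :
  0 <= Delta_beta beta u x -> ge_parent u x ->
  m%:R * u x <= \sum_(i < m) u (i :: x).
Proof.
have m_gt0R : (0 : R) < m%:R by rewrite ltr0n.
case: x => [|a x] /=.
  rewrite subr_ge0 => le_mean _.
  have minv_gt0 : 0 < m%:R^-1 :> R by rewrite invr_gt0.
  by rewrite -(ler_pM2l minv_gt0) mulKf ?gt_eqF.
set S := \sum_(i < m) _ => Delta_ge0 le_parent.
have p_gt0 : 0 < (p_beta beta ^+ (size x).+1)^-1.
  by rewrite invr_gt0 exprn_gt0 // p_beta_gt0.
rewrite pmulr_lge0 // in Delta_ge0.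
have le_beta : beta * u x <= beta * u (a :: x) by rewrite ler_wpM2l.
have : (1 - beta) * u (a :: x) <= (1 - beta) * (S / m%:R).
  by rewrite mulrCA mulrA; move: Delta_ge0 le_beta; lra.
by rewrite ler_pM2l ?subr_gt0 // ler_pdivlMr // mulrC.
Qed.

Hypothesis Delta_ge0 : forall x, 0 < u x -> 0 <= Delta_beta beta u x.
Hypothesis u_cvg0 :
  forall b : nat -> 'I_m, ((fun n => u (branch_vertex b n)) @ \oo --> (0 : R))%classic.

Lemma exists_ge_child x :
  0 < u x -> ge_parent u x -> exists i : 'I_m, u x <= u (i :: x).
Proof.
move=> ux_gt0 ge_x; apply: exists_ge_mean => //.
exact: mean_children_ge (Delta_ge0 ux_gt0) ge_x.
Qed.

Lemma maximum_principle x : u x <= 0.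
Proof.
rewrite leNgt; apply/negP => ux_gt0.
have [y [le_xy ge_y]] := exists_ge_parent_ge u x.
have uy_gt0 := lt_le_trans ux_gt0 le_xy.
pose next z := odflt (Ordinal m_gt0) [pick i | u z <= u (i :: z)].
have climb_ge k : u y <= u (climb next y k) /\ ge_parent u (climb next y k).
  elim: k => [|k [le_yk ge_k]] //=.
  have [i le_i] := exists_ge_child (lt_le_trans uy_gt0 le_yk) ge_k.
  rewrite /next; case: pickP => [j le_j | /(_ i)]; last by rewrite le_i.
  by split; first exact: le_trans le_j.
pose b := climbing_branch next y.
have : u y <= lim ((fun n => u (branch_vertex b n)) @ \oo)%classic.
  apply: limr_ge; first exact: cvgP (u_cvg0 b).
  exists (size y) => // n le_yn; rewrite -(subnKC le_yn).
  by rewrite branch_vertex_climbing; case: (climb_ge (n - size y)%N).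
by rewrite (cvg_lim _ (u_cvg0 b)) // leNgt uy_gt0.
Qed.

End MaximumPrinciple.

Theorem lemma3p1 (R : realType) (m : nat) (beta lambda : R) :
  (2 <= m)%N -> 0 <= beta -> beta < 1 ->
  is_eigenvalue m beta lambda -> 0 < lambda.
Proof.
move=> m_ge2 beta_ge0 beta_lt1 [u [_ [x ux_neq0] eig u_cvg0]].
have m_gt0 : (0 < m)%N by apply: leq_trans m_ge2.
rewrite ltNge; apply/negP => lambda_le0.
have Delta_ge0 (v : vertex m -> R) z : - Delta_beta beta v z = lambda * v z ->
    0 < v z -> 0 <= Delta_beta beta v z.
  by move=> eig_z vz_gt0; rewrite -oppr_le0 eig_z mulr_le0_ge0 // ltW.
have u_le0 z : u z <= 0.
  exact: maximum_principle m_gt0 beta_ge0 beta_lt1 (fun w => Delta_ge0 u w (eig w))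
    u_cvg0 z.
have Nu_le0 z : - u z <= 0.
  apply: (maximum_principle (u := fun w => - u w) m_gt0 beta_ge0 beta_lt1).
    by move=> w; apply: Delta_ge0; rewrite Delta_betaN opprK mulrN -eig opprK.
  by move=> b; rewrite -oppr0; apply: cvgN.
by move: ux_neq0; rewrite eq_le u_le0 -oppr_le0 Nu_le0.
Qed.
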